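(* Let $X,Y$ be template graphs with $O(X)=O(Y)$ such that the $(X,Y)$-extension is 3-compatible. Suppose that for every 3-connected cubic graph $H$ containing a subgraph isomorphic to $c(Y)$, either $H$ has a 3-decomposition, or (the copy of) $c(Y)$ is an induced subgraph of $H$ and the reduction $H[Y\to X]$ is a simple 3-connected graph. Then $c(Y)$ is reducible, i.e. no 3-connected cubic graph without a 3-decomposition and of minimum order among all such graphs contains a subgraph isomorphic to $c(Y)$.
   Context: All graphs are finite; cubic means 3-regular, and cubic graphs are simple. A 3-decomposition of $G$ is a partition of $E(G)$ into the edge sets of a spanning tree, a (possibly empty) 2-regular subgraph and a (possibly empty) matching. A template graph is a graph $X$ whose vertex set is partitioned into inner vertices $I(X)$, all of degree 3, and outer vertices $O(X)$, all of degree 1; its core $c(X)$ is $X-O(X)$. Transformations: let $X,Y$ be template graphs with $O(X)=O(Y)$, let $G$ be a cubic graph and $\varphi$ an isomorphism from $c(X)$ onto an induced subgraph $R'$ of $G$. Since $G$ is cubic, each $\varphi(v)$ has exactly as many neighbours outside $R'$ as $v$ has outer neighbours in $X$; fix a map $\psi\colon O(X)\to V(G)\setminus V(R')$ such that $vw\mapsto \varphi(v)\psi(w)$ ($v\in I(X)$, $w\in O(X)$, $vw\in E(X)$) is a bijection onto the set of edges of $G$ between $R'$ and $G-V(R')$. Then $G[X\to Y]:=(G-V(R'))\cup c(Y)+\{v\psi(w): vw\in E(Y), w\in O(Y)\}$ (possibly a multigraph). It is called an extension if $|V(X)|<|V(Y)|$ and a reduction if $|V(X)|>|V(Y)|$.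 The $(X,Y)$-extension is 3-compatible if for every cubic graph $G$ with a 3-decomposition and every graph $H=G[X\to Y]$ obtained this way, $H$ has a 3-decomposition. *)

From mathcomp Require Import all_boot.
Set Implicit Arguments. Unset Strict Implicit. Unset Printing Implicit Defensive.

(** Finite multigraphs: a finite vertex type, a finite edge type, and for each
    edge its (ordered, but read as unordered) pair of end vertices.  Loops and
    parallel edges are allowed. *)
Record mgraph := MGraph { mV : finType; mE : finType; mends : mE -> mV * mV }.

Section Graphs.
Variable G : mgraph.

Definition mult (x y : mV G) : nat :=
  #|[set e : mE G | (mends e == (x, y)) || (mends e == (y, x))]|.

(** degree of v in the spanning subgraph with edge set F (a loop counts 2) *)
Definition edeg (F : {set mE G}) (v : mV G) : nat :=
  \sum_(e in F) (((mends e).1 == v) + ((mends e).2 == v)).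

Definition deg (v : mV G) : nat := edeg setT v.

Definition simple : Prop :=
  (forall e : mE G, (mends e).1 != (mends e).2) /\ (forall x y : mV G, mult x y <= 1).

Definition cubic : Prop := simple /\ forall v : mV G, deg v = 3.

Definition adj_in (F : {set mE G}) : rel (mV G) :=
  fun x y => [exists e in F, (mends e == (x, y)) || (mends e == (y, x))].

(** (V, T) is a tree: connected and acyclic (no edge of T has its ends
    connected in T - e) *)
Definition spanning_tree (T : {set mE G}) : Prop :=
  (forall x y : mV G, connect (adj_in T) x y) /\
  (forall e, e \in T -> ~~ connect (adj_in (T :\ e)) (mends e).1 (mends e).2).

Definition two_regular (C : {set mE G}) : Prop :=
  forall v : mV G, edeg C v = 0 \/ edeg C v = 2.

Definition matching (M : {set mE G}) : Prop := forall v : mV G, edeg M v <= 1.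

Definition three_decomposition (T C M : {set mE G}) : Prop :=
  [/\ T :&: C = set0, T :&: M = set0, C :&: M = set0 & T :|: C :|: M = setT] /\
  [/\ spanning_tree T, two_regular C & matching M].

Definition has_3dec : Prop := exists T C M, three_decomposition T C M.

Definition connected_on (A : {set mV G}) : Prop :=
  forall x y, x \in A -> y \in A ->
    connect (fun a b => [&& a \in A, b \in A & adj_in setT a b]) x y.

Definition three_connected : Prop :=
  3 < #|mV G| /\ forall S : {set mV G}, #|S| <= 2 -> connected_on (~: S).

End Graphs.

(** Template graphs with outer vertex set W: vertex type = inner type + W. *)
Record template (W : finType) :=
  Template { tI : finType; tE : finType; tends : tE -> (tI + W)%type * (tI + W)%type }.

Definition tgraph (W : finType) (X : template W) : mgraph :=
  @MGraph (tI X + W)%type (tE X) (@tends W X).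

Definition tmult (W : finType) (X : template W) (a b : (tI X + W)%type) : nat :=
  @mult (tgraph X) a b.

Definition is_outer (A W : Type) (a : (A + W)%type) : bool :=
  if a is inr _ then true else false.

(** inner vertices have degree 3, outer vertices degree 1, and (as implicit in
    the transformation, which only reconnects inner-outer edges) no edge joins
    two outer vertices *)
Definition is_template (W : finType) (X : template W) : Prop :=
  (forall u : tI X, @deg (tgraph X) (inl u) = 3) /\
  (forall w : W, @deg (tgraph X) (inr w) = 1) /\
  (forall e : tE X, ~~ (is_outer (tends e).1 && is_outer (tends e).2)).

(** Multiplicities of the graph G[X -> Y], whose vertices are those of
    G - V(R') (tagged inl) and the inner vertices of Y (tagged inr). *)
Definition target_mult (G : mgraph) (W : finType) (Y : template W)
    (psi : W -> mV G) (s t : (mV G + tI Y)%type) : nat :=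
  match s, t with
  | inl x, inl y => mult x y
  | inr u, inr v => tmult (inl u) (inl v)
  | inr u, inl x | inl x, inr u => \sum_(w | psi w == x) tmult (inl u) (inr w)
  end.

(** H is (isomorphic to) G[X -> Y] via phi (an isomorphism of c(X) onto an
    induced subgraph R' of G) and psi : O(X) -> V(G) - V(R') (such that
    vw |-> phi(v)psi(w) is a bijection onto the edges between R' and the rest). *)
Definition transformation (G : mgraph) (W : finType) (X Y : template W)
    (phi : tI X -> mV G) (psi : W -> mV G) (H : mgraph) : Prop :=
  [/\ injective phi,
      (forall u v : tI X, tmult (inl u) (inl v) = mult (phi u) (phi v)),
      (forall w : W, psi w \notin codom phi),
      (forall (u : tI X) (x : mV G), x \notin codom phi ->
          mult (phi u) x = \sum_(w | psi w == x) tmult (inl u) (inr w)) &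
      exists sigma : mV H -> (mV G + tI Y)%type,
        [/\ injective sigma,
            (forall s, (s \in codom sigma) =
                       (if s is inl x then x \notin codom phi else true)) &
            forall h1 h2 : mV H, mult h1 h2 = target_mult psi (sigma h1) (sigma h2)]].

Arguments transformation {G W} X Y phi psi H.

Definition three_compatible (W : finType) (X Y : template W) : Prop :=
  forall (G : mgraph) (phi : tI X -> mV G) (psi : W -> mV G) (H : mgraph),
    cubic G -> has_3dec G -> transformation X Y phi psi H -> has_3dec H.

Definition core_subgraph (W : finType) (Y : template W) (H : mgraph)
    (phi : tI Y -> mV H) : Prop :=
  injective phi /\ forall u v : tI Y, tmult (inl u) (inl v) <= mult (phi u) (phi v).

Definition core_induced (W : finType) (Y : template W) (H : mgraph)
    (phi : tI Y -> mV H) : Prop :=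
  injective phi /\ forall u v : tI Y, tmult (inl u) (inl v) = mult (phi u) (phi v).

Definition min_counterexample (H : mgraph) : Prop :=
  [/\ cubic H, three_connected H, ~ has_3dec H &
      forall H' : mgraph, cubic H' -> three_connected H' -> ~ has_3dec H' ->
        #|mV H| <= #|mV H'|].

Definition reducible (W : finType) (Y : template W) : Prop :=
  forall H : mgraph, min_counterexample H ->
    forall phi : tI Y -> mV H, ~ core_subgraph phi.

From mathcomp Require Import all_boot zify.
Set Implicit Arguments. Unset Strict Implicit. Unset Printing Implicit Defensive.

(* Let H be a minimum counterexample containing c(Y). By hypothesis H' = H[Y -> X]
   is simple and 3-connected. A transformation keeps the degree of every vertex
   outside the replaced core, and the new core vertices have degree 3 as inner
   vertices of X, so H' is cubic; it has |I(Y)| - |I(X)| > 0 fewer vertices than H.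
   Inverting the realisation map shows H = H'[X -> Y], so by 3-compatibility a
   3-decomposition of H' would give one of H: H' is a smaller counterexample. *)

Lemma sum_codom_inj (A B : finType) (f : A -> B) (P : pred B) (F : B -> nat) :
  injective f -> codom f =i P -> \sum_a F (f a) = \sum_(b | P b) F b.
Proof.
move=> f_inj codomE.
rewrite -big_image big_uniq; last by rewrite map_inj_uniq ?enum_uniq.
by apply: eq_bigl => b; rewrite codomE.
Qed.

Lemma big_split_codom (A B : finType) (f : A -> B) (F : B -> nat) :
  injective f -> \sum_b F b = \sum_(b | b \notin codom f) F b + \sum_a F (f a).
Proof.
move=> f_inj; rewrite (bigID (mem (codom f))) addnC.
by rewrite (sum_codom_inj (P := fun b => b \in codom f) F f_inj).
Qed.

Section Multigraphs.
Variable G : mgraph.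

Lemma mult_sym (x y : mV G) : mult x y = mult y x.
Proof. by apply: eq_card => e; rewrite !inE orbC. Qed.

Lemma mult_sum (x y : mV G) :
  mult x y = \sum_e ((mends e == (x, y)) || (mends e == (y, x)) : nat).
Proof.
by rewrite /mult -sum1_card big_mkcond; apply: eq_bigr => e _; rewrite inE; case: ifP.
Qed.

(* A loop at v contributes 2 to deg v but only 1 to mult v v. *)
Lemma deg_mult (v : mV G) : deg v = \sum_y mult v y + mult v v.
Proof.
have sum_eq1 (c : mV G) : \sum_y (c == y : nat) = 1.
  by rewrite (bigD1 c) //= eqxx big1 // => y /negbTE; rewrite eq_sym => ->.
rewrite /deg /edeg (eq_bigr _ (fun y _ => mult_sum v y)) mult_sum exchange_big -big_split.
apply: eq_big => [e|e _]; first by rewrite in_setT.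
case: (mends e) => a b /=; under eq_bigr do rewrite !xpair_eqE; rewrite !xpair_eqE.
have [->|av] := eqVneq a v; have [->|bv] := eqVneq b v => /=.
all: under eq_bigr => y _ do rewrite ?andbT ?andbF ?orbb ?orbF.
all: by rewrite ?sum_eq1 ?big1.
Qed.

End Multigraphs.

Section Templates.
Variables (W : finType) (X : template W).

Lemma deg_tgraph_inl (u : tI X) :
  @deg (tgraph X) (inl u) =
    \sum_v tmult (inl u) (inl v) + \sum_w tmult (inl u) (inr w) + tmult (inl u) (inl u).
Proof. by rewrite deg_mult big_sumType. Qed.

Lemma sum_tmult_inr (w : W) : is_template X -> \sum_(u : tI X) tmult (inl u) (inr w) = 1.
Proof.
case=> _ [deg_outer no_outer_edge]; rewrite -(deg_outer w) deg_mult big_sumType /=.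
have no_outer_mult (w' : W) : @mult (tgraph X) (inr w) (inr w') = 0.
  apply/eqP; rewrite cards_eq0; apply/eqP/setP => e; rewrite !inE.
  apply: contraNF (no_outer_edge e) => /=; case: (tends e) => a b.
  by case/orP => /eqP [-> ->].
rewrite no_outer_mult [s in _ + s + _]big1 // !addn0; apply: eq_bigr => u _; exact: mult_sym.
Qed.

End Templates.

Section Transformation.
Variables (W : finType) (X Y : template W) (G H : mgraph).
Variables (phi : tI X -> mV G) (psi : W -> mV G).

Section Realisation.
Variable sigma : mV H -> (mV G + tI Y)%type.
Hypotheses (phi_inj : injective phi)
  (mult_phi : forall u v, tmult (inl u) (inl v) = mult (phi u) (phi v))
  (psi_outside : forall w, psi w \notin codom phi)
  (mult_phi_outside : forall u x, x \notin codom phi ->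
     mult (phi u) x = \sum_(w | psi w == x) tmult (inl u) (inr w))
  (sigma_inj : injective sigma)
  (codom_sigma : forall s, (s \in codom sigma) =
     (if s is inl x then x \notin codom phi else true))
  (mult_sigma : forall h1 h2, mult h1 h2 = target_mult psi (sigma h1) (sigma h2)).

Lemma sigma_inl_outside h x : sigma h = inl x -> x \notin codom phi.
Proof. by move=> sigma_h; have := codom_f sigma h; rewrite codom_sigma sigma_h. Qed.

Lemma sum_sigma (F : mV G + tI Y -> nat) :
  \sum_h F (sigma h) = \sum_(x | x \notin codom phi) F (inl x) + \sum_u F (inr u).
Proof. by rewrite (sum_codom_inj F sigma_inj codom_sigma) big_sumType. Qed.

Lemma card_sigma : #|mV H| + #|tI X| = #|mV G| + #|tI Y|.
Proof.
have := sum_sigma (fun=> 1); have := big_split_codom (fun=> 1) phi_inj.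
by rewrite /= !sum1_card => -> ->; rewrite addnAC.
Qed.

Lemma deg_sigma_inr h u : sigma h = inr u -> deg h = @deg (tgraph Y) (inl u).
Proof.
move=> sigma_h; rewrite deg_mult deg_tgraph_inl mult_sigma sigma_h.
under eq_bigr do rewrite mult_sigma sigma_h.
rewrite sum_sigma /=; congr (_ + _); rewrite addnC; congr (_ + _).
by rewrite [RHS](partition_big psi (fun x => x \notin codom phi)).
Qed.

Lemma deg_sigma_inl h x : is_template X -> is_template Y ->
  sigma h = inl x -> deg h = deg x.
Proof.
move=> tX tY sigma_h; rewrite !deg_mult mult_sigma sigma_h /=.
rewrite (big_split_codom _ phi_inj); under eq_bigr do rewrite mult_sigma sigma_h.
rewrite sum_sigma /=; congr (_ + _ + _).
have x_out := sigma_inl_outside sigma_h.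
under [RHS]eq_bigr => u _ do rewrite mult_sym (mult_phi_outside u x_out).
rewrite exchange_big [RHS]exchange_big; apply: eq_bigr => w _.
by rewrite (sum_tmult_inr _ tX) (sum_tmult_inr _ tY).
Qed.

(* Inverting sigma on its image exhibits G as H[Y -> X]. *)
Section Inverse.
Variables (phi' : tI Y -> mV H) (psi' : W -> mV H) (tau : mV G -> (mV H + tI X)%type).
Hypotheses (sigma_phi' : forall u, sigma (phi' u) = inr u)
  (sigma_psi' : forall w, sigma (psi' w) = inl (psi w))
  (tau_spec : forall x,
     match tau x with inl h => sigma h = inl x | inr u => phi u = x end).

Lemma tau_phi u : tau (phi u) = inr u.
Proof.
have := tau_spec (phi u); case: (tau (phi u)) => [h|v] spec.
  by have := sigma_inl_outside spec; rewrite codom_f.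
by rewrite (phi_inj spec).
Qed.

Lemma tau_sigma h x : sigma h = inl x -> tau x = inl h.
Proof.
move=> sigma_h; have := tau_spec x; case: (tau x) => [h'|v] spec.
  by rewrite (sigma_inj (etrans spec (esym sigma_h))).
by have := sigma_inl_outside sigma_h; rewrite -spec codom_f.
Qed.

Lemma phi'_inj : injective phi'.
Proof. by move=> u v eq_uv; have := sigma_phi' u; rewrite eq_uv sigma_phi' => -[]. Qed.

Lemma mult_phi' u v : tmult (inl u) (inl v) = mult (phi' u) (phi' v).
Proof. by rewrite mult_sigma !sigma_phi'. Qed.

Lemma psi'_outside w : psi' w \notin codom phi'.
Proof. by apply/codomP => -[u eq_wu]; have := sigma_psi' w; rewrite eq_wu sigma_phi'. Qed.

Lemma eq_psi' w h x : sigma h = inl x -> (psi' w == h) = (psi w == x).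
Proof.
move=> sigma_h; apply/eqP/eqP => [eq_wh|eq_wx].
  by move: sigma_h; rewrite -eq_wh sigma_psi' => -[].
by apply: sigma_inj; rewrite sigma_psi' sigma_h eq_wx.
Qed.

Lemma mult_phi'_outside u h : h \notin codom phi' ->
  mult (phi' u) h = \sum_(w | psi' w == h) tmult (inl u) (inr w).
Proof.
rewrite mult_sigma sigma_phi'; case sigma_h: (sigma h) => [x|v] /= h_out.
  by apply: eq_bigl => w; rewrite (eq_psi' w sigma_h).
by move: h_out; rewrite (sigma_inj (etrans sigma_h (esym (sigma_phi' v)))) codom_f.
Qed.

Lemma tau_inj : injective tau.
Proof.
move=> x1 x2 eq_tau; have := tau_spec x1; have := tau_spec x2; rewrite eq_tau.
by case: (tau x2) => [h|u] -> // -[].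
Qed.

Lemma codom_tau s : (s \in codom tau) = (if s is inl h then h \notin codom phi' else true).
Proof.
case: s => [h|u] /=; last by rewrite -(tau_phi u) codom_f.
case sigma_h: (sigma h) => [x|v].
  rewrite -(tau_sigma sigma_h) codom_f; apply/esym/codomP => -[v eq_hv].
  by rewrite eq_hv sigma_phi' in sigma_h.
have -> : h = phi' v by apply: sigma_inj; rewrite sigma_h sigma_phi'.
rewrite codom_f; apply/codomP => -[x eq_tau].
by have := tau_spec x; rewrite -eq_tau sigma_phi'.
Qed.

Lemma mult_tau x1 x2 : mult x1 x2 = target_mult psi' (tau x1) (tau x2).
Proof.
have := tau_spec x1; have := tau_spec x2.
case: (tau x1) => [h1|u1]; case: (tau x2) => [h2|u2] /= spec2 spec1.
- by rewrite mult_sigma spec1 spec2.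
- rewrite -spec2 mult_sym (mult_phi_outside _ (sigma_inl_outside spec1)).
  by apply: eq_bigl => w; rewrite (eq_psi' w spec1).
- rewrite -spec1 (mult_phi_outside _ (sigma_inl_outside spec2)).
  by apply: eq_bigl => w; rewrite (eq_psi' w spec2).
- by rewrite -spec1 -spec2 mult_phi.
Qed.

Lemma transformation_inverse : transformation Y X phi' psi' G.
Proof.
split; [exact: phi'_inj | exact: mult_phi' | exact: psi'_outside | exact: mult_phi'_outside |].
by exists tau; split; [exact: tau_inj | exact: codom_tau | exact: mult_tau].
Qed.

End Inverse.
End Realisation.

Lemma transformation_card : transformation X Y phi psi H ->
  #|mV H| + #|tI X| = #|mV G| + #|tI Y|.
Proof.
case=> phi_inj _ _ _ [sigma [sigma_inj codom_sigma _]].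
exact: card_sigma phi_inj sigma_inj codom_sigma.
Qed.

Lemma transformation_cubic : is_template X -> is_template Y ->
  cubic G -> simple H -> transformation X Y phi psi H -> cubic H.
Proof.
move=> tX tY [_ deg_G] simple_H.
case=> phi_inj _ psi_out mult_out [sigma [sigma_inj codom_sigma mult_sigma]].
split=> // h; case sigma_h: (sigma h) => [x|u].
  by rewrite -(deg_G x); apply: deg_sigma_inl sigma_h.
by case: tY => deg_inner _; rewrite -(deg_inner u); apply: deg_sigma_inr sigma_h.
Qed.

Lemma transformation_reverse : transformation X Y phi psi H ->
  exists (phi' : tI Y -> mV H) (psi' : W -> mV H), transformation Y X phi' psi' G.
Proof.
case=> phi_inj mult_phi psi_out mult_out [sigma [sigma_inj codom_sigma mult_sigma]].
have sigma_onto s : (if s is inl x then x \notin codom phi else true) -> exists h, sigma h = s.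
  by rewrite -codom_sigma => /codomP [h ->]; exists h.
have [phi' sigma_phi'] := fin_all_exists (fun u => sigma_onto (inr u) isT).
have [psi' sigma_psi'] := fin_all_exists (fun w => sigma_onto (inl (psi w)) (psi_out w)).
have tau_ex x : exists t : (mV H + tI X)%type,
    match t with inl h => sigma h = inl x | inr u => phi u = x end.
  case: (boolP (x \in codom phi)) => [/codomP [u ->]|x_out]; first by exists (inr u).
  by have [h sigma_h] := sigma_onto (inl x) x_out; exists (inl h).
have [tau tau_spec] := fin_all_exists tau_ex.
exists phi', psi'.
exact (transformation_inverse phi_inj mult_phi mult_out sigma_inj codom_sigma mult_sigma
  sigma_phi' sigma_psi' tau_spec).
Qed.

End Transformation.

Theorem lemma11 (W : finType) (X Y : template W) :
  is_template X -> is_template Y ->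
  #|tI X| + #|W| < #|tI Y| + #|W| ->
  three_compatible X Y ->
  (forall (H : mgraph) (phi : tI Y -> mV H),
     cubic H -> three_connected H -> core_subgraph phi ->
     has_3dec H \/
     (core_induced phi /\
      exists (psi : W -> mV H) (H' : mgraph),
        transformation Y X phi psi H' /\ simple H' /\ three_connected H')) ->
  reducible Y.
Proof.
move=> tX tY ltXY compatible reduce H [cubic_H conn_H no_dec_H min_H] phi core_H.
have [//|[_ [psi [H' [red [simple_H' conn_H']]]]]] := reduce H phi cubic_H conn_H core_H.
have cubic_H' := transformation_cubic tY tX cubic_H simple_H' red.
have [phi' [psi' ext]] := transformation_reverse red.
have no_dec_H' : ~ has_3dec H'.
  by move=> dec_H'; apply/no_dec_H/(compatible _ _ _ _ cubic_H' dec_H' ext).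
have := min_H H' cubic_H' conn_H' no_dec_H'; have := transformation_card red; lia.
Qed.
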